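(* Let $X_0$ and $X_1$ be mm-spaces with $X_0\prec X_1$, and let $f\colon X_1\to X_0$ be a 1-Lipschitz map with $f_*\mu_{X_1}=\mu_{X_0}$. For $0<t<1$ define a metric on $X_1$ by $d_{X_t}(x,x'):=(1-t)\,d_{X_0}(f(x),f(x'))+t\,d_{X_1}(x,x')$ and the mm-space $X_t:=(X_1,d_{X_t},\mu_{X_1})$. Then $[0,1]\ni t\mapsto X_t$ is a $\square$-continuous path from $X_0$ to $X_1$, and it is monotone with respect to the Lipschitz order: $X_s\prec X_t$ for all $0\le s\le t\le1$.
   Context: An mm-space is a triple $(X,d_X,\mu_X)$ where $(X,d_X)$ is a complete separable metric space and $\mu_X$ a Borel probability measure, considered up to mm-isomorphism (an isometry between the supports of the measures pushing one measure to the other). A parameter of $X$ is a Borel map $\varphi\colon [0,1)\to X$ with $\varphi_*\mathcal{L}^1=\mu_X$. The box distance $\square(X,Y)$ is the infimum of $\varepsilon\ge 0$ such that there exist parameters $\varphi$ of $X$, $\psi$ of $Y$ and a Borel set $I_0\subset[0,1)$ with $\mathcal{L}^1(I_0)\ge 1-\varepsilon$ and $|d_X(\varphi(s),\varphi(t))-d_Y(\psi(s),\psi(t))|\le\varepsilon$ for all $s,t\in I_0$. Lipschitz order: $Y\prec X$ if there exists a 1-Lipschitz map $g\colon X\to Y$ with $g_*\mu_X=\mu_Y$. *)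

From HB Require Import structures.
From mathcomp Require Import all_boot all_order all_algebra.
From mathcomp Require Import all_classical all_reals all_analysis.
Set Implicit Arguments. Unset Strict Implicit. Unset Printing Implicit Defensive.
Import Order.TTheory GRing.Theory Num.Theory.
Import numFieldNormedType.Exports.
Local Open Scope classical_set_scope.
Local Open Scope ring_scope.

(* Raw data of a (candidate) mm-space: carrier, distance, measure
   (real-valued set function, only meaningful on Borel sets). *)
Record mmData (R : realType) := MMData {
  carrier :> Type;
  mdist : carrier -> carrier -> R;
  mmeas : set carrier -> R }.

Arguments mmeas {R} m _.
Section MM.
Variable R : realType.

Definition d_open (T : Type) (d : T -> T -> R) (A : set T) : Prop :=
  forall x, A x -> exists e : R, 0 < e /\ forall y, d x y < e -> A y.

Definition d_borel (T : Type) (d : T -> T -> R) : set (set T) :=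
  <<s [set A | d_open d A] >>.

Definition mm_borel (X : mmData R) : set (set X) := d_borel (@mdist R X).
Arguments mm_borel : clear implicits.

Definition is_metric (T : Type) (d : T -> T -> R) : Prop :=
  (forall x y, d x y = 0 <-> x = y) /\
  (forall x y, d x y = d y x) /\
  (forall x y z, d x z <= d x y + d y z).

Definition d_cauchy (T : Type) (d : T -> T -> R) (u : nat -> T) : Prop :=
  forall e : R, 0 < e -> exists N, forall m n, (N <= m)%N -> (N <= n)%N ->
    d (u m) (u n) < e.

Definition d_converges (T : Type) (d : T -> T -> R) (u : nat -> T) (x : T) :=
  forall e : R, 0 < e -> exists N, forall n, (N <= n)%N -> d (u n) x < e.

Definition d_complete (T : Type) (d : T -> T -> R) : Prop :=
  forall u : nat -> T, d_cauchy d u -> exists x, d_converges d u x.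

Definition d_separable (T : Type) (d : T -> T -> R) : Prop :=
  exists u : nat -> T, forall x (e : R), 0 < e -> exists n, d x (u n) < e.

Definition borel_probability (T : Type) (S : set (set T)) (mu : set T -> R) :=
  (forall A, S A -> 0 <= mu A) /\
  mu setT = 1 /\
  (forall F : nat -> set T, (forall n, S (F n)) -> trivIset setT F ->
     (fun n => \sum_(i < n) mu (F i)) @ \oo --> mu (\bigcup_n F n)).

Definition mm_space (X : mmData R) : Prop :=
  is_metric (@mdist R X) /\ d_complete (@mdist R X) /\
  d_separable (@mdist R X) /\ borel_probability (mm_borel X) (@mmeas R X).

Definition one_lipschitz (X Y : mmData R) (g : X -> Y) : Prop :=
  forall x x', mdist (g x) (g x') <= mdist x x'.

Definition push_eq (X Y : mmData R) (g : X -> Y) : Prop :=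
  forall B, mm_borel Y B -> mmeas X (g @^-1` B) = mmeas Y B.

(* Lipschitz order: lip_prec Y X  means  Y ≺ X *)
Definition lip_prec (Y X : mmData R) : Prop :=
  exists g : X -> Y, one_lipschitz g /\ push_eq g.

Definition parameter (X : mmData R) (phi : R -> X) : Prop :=
  forall B, mm_borel X B ->
    measurable ([set s : R | `[0, 1[%classic s /\ B (phi s)]) /\
    lebesgue_measure ([set s : R | `[0, 1[%classic s /\ B (phi s)]) =
      (mmeas X B)%:E.

Definition box_admissible (X Y : mmData R) (e : R) : Prop :=
  0 <= e /\
  exists (phi : R -> X) (psi : R -> Y) (I0 : set R),
    parameter phi /\ parameter psi /\
    I0 `<=` `[0, 1[%classic /\ measurable I0 /\
    ((1 - e)%:E <= lebesgue_measure I0)%E /\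
    forall s t, I0 s -> I0 t ->
      `|mdist (phi s) (phi t) - mdist (psi s) (psi t)| <= e.

Definition box_dist (X Y : mmData R) : R := inf [set e | box_admissible X Y e].

Definition interp_dist (X0 X1 : mmData R) (f : X1 -> X0) (t : R) :=
  fun x x' : X1 => (1 - t) * mdist (f x) (f x') + t * mdist x x'.

Definition interp (X0 X1 : mmData R) (f : X1 -> X0) (t : R) : mmData R :=
  if t <= 0 then X0 else if 1 <= t then X1 else
  @MMData R X1 (interp_dist f t) (@mmeas R X1).

End MM.

From Pilot Require Import Defs.
From HB Require Import structures.
From mathcomp Require Import all_boot all_order all_algebra.
From mathcomp Require Import all_classical all_reals all_analysis.
From mathcomp Require Import ring lra.
Import Order.TTheory GRing.Theory Num.Theory.
Import numFieldNormedType.Exports.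
Local Open Scope classical_set_scope.
Local Open Scope ring_scope.

(* For 0 < t < 1 the distance d_t = (1-t) d_0(f _, f _) + t d_1 satisfies
   t d_1 <= d_t <= d_1, so X_t is an mm-space with the Borel sets and measure
   of X_1, and a parameter phi of X_1 is a parameter of every X_t (via f \o phi
   for X_0).  Since |d_s - d_t| <= |s - t| d_1 and d_1(phi a, phi b) is bounded
   on a subset of [0,1) of measure close to 1, the same phi witnesses a small
   box distance between X_s and X_t when |s - t| is small.  Monotonicity holds
   because d_s <= d_t for s <= t, as d_0(f x, f x') <= d_1(x, x'). *)

Local Notation mdist := Defs.mdist.

Section DistanceComparison.
Context {R : realType} {T : Type}.

Lemma is_metric_ge0 {d : T -> T -> R} : is_metric d -> forall x y, 0 <= d x y.
Proof.
move=> [d0 [dC dtri]] x y.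
have := dtri x y x; rewrite (proj2 (d0 x x) erefl) dC => h.
by rewrite -(@pmulr_rge0 _ 2) // mulr2n mulrDl !mul1r.
Qed.

Lemma d_open_ball {d : T -> T -> R} (x : T) (r : R) :
  is_metric d -> d_open d [set y | d x y < r].
Proof.
move=> [_ [_ dtri]] y /= dxy; exists (r - d x y); split; first by rewrite subr_gt0.
by move=> z dyz; have := dtri x y z; lra.
Qed.

Lemma d_separable_le (d d' : T -> T -> R) :
  (forall x y, d x y <= d' x y) -> d_separable d' -> d_separable d.
Proof.
move=> le_dd' [u u_dense]; exists u => x e e0.
by have [n ?] := u_dense x e e0; exists n; exact: le_lt_trans (le_dd' _ _) _.
Qed.

Section Comparable.
Context {d d' : T -> T -> R} {c : R}.
Hypotheses (c_gt0 : 0 < c) (le_dd' : forall x y, d x y <= d' x y)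
  (ge_dd' : forall x y, c * d' x y <= d x y).

Lemma d_open_comparable : d_open d = d_open d'.
Proof.
apply/funext => A; apply/propext; split => oA x Ax; have [e [e0 he]] := oA x Ax.
- by exists e; split => // y dy; apply: he; exact: le_lt_trans (le_dd' _ _) dy.
- exists (c * e); split; first exact: mulr_gt0.
  by move=> y dy; apply: he; rewrite -(ltr_pM2l c_gt0); exact: le_lt_trans dy.
Qed.

Lemma d_borel_comparable : d_borel d = d_borel d'.
Proof. by rewrite /d_borel d_open_comparable. Qed.

Lemma d_complete_comparable : d_complete d' -> d_complete d.
Proof.
move=> complete' u u_cauchy.
have [x ux] : exists x, d_converges d' u x.
  apply: complete' => e e0; have [N hN] := u_cauchy (c * e) (mulr_gt0 c_gt0 e0).
  exists N => m n hm hn; rewrite -(ltr_pM2l c_gt0).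
  exact: le_lt_trans (ge_dd' _ _) (hN _ _ hm hn).
exists x => e e0; have [N hN] := ux e e0; exists N => n hn.
exact: le_lt_trans (le_dd' _ _) (hN _ hn).
Qed.

End Comparable.
End DistanceComparison.

Section MMSpaces.
Context {R : realType}.

Lemma mm_space_comparable {X : mmData R} {d : X -> X -> R} {c : R} :
  0 < c -> (forall x y, d x y <= mdist x y) -> (forall x y, c * mdist x y <= d x y) ->
  is_metric d -> mm_space X -> mm_space (@MMData R X d (mmeas X)).
Proof.
move=> c_gt0 le_d ge_d d_metric [_ [X_complete [X_separable X_prob]]].
split => //=; split; first exact: d_complete_comparable c_gt0 le_d ge_d X_complete.
split; first exact: d_separable_le le_d X_separable.
by rewrite /mm_borel /= (d_borel_comparable c_gt0 le_d ge_d).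
Qed.

Lemma d_borel_preimage {T U : Type} {d : T -> T -> R} {d' : U -> U -> R} {g : T -> U} :
  (forall A, d_open d' A -> d_open d (g @^-1` A)) ->
  forall B, d_borel d' B -> d_borel d (g @^-1` B).
Proof.
move=> g_open.
have [borel0 borelC borelU] : sigma_algebra setT (d_borel d) := smallest_sigma_algebra _ _.
have preimage_sigma : sigma_algebra setT [set B | d_borel d (g @^-1` B)].
  split => /=.
  - by rewrite preimage_set0.
  - by move=> A hA; have := borelC _ hA; rewrite !setTD preimage_setC.
  - by move=> F hF; rewrite preimage_bigcup; exact: borelU.
apply: (@smallest_sub _ (sigma_algebra setT) [set A | d_open d' A] _ preimage_sigma).
by move=> A oA /=; apply: sub_gen_smallest; exact: g_open.
Qed.

Lemma one_lipschitz_borel {X Y : mmData R} {g : X -> Y} :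
  one_lipschitz g -> forall B, @mm_borel R Y B -> @mm_borel R X (g @^-1` B).
Proof.
move=> g_lip; apply: d_borel_preimage => A oA x Ax; have [e [e0 he]] := oA _ Ax.
by exists e; split => // y dy; apply: he; exact: le_lt_trans (g_lip _ _) dy.
Qed.

Lemma parameter_comp {X Y : mmData R} {g : X -> Y} {phi : R -> X} :
  (forall B, @mm_borel R Y B -> @mm_borel R X (g @^-1` B)) -> push_eq g ->
  parameter phi -> parameter (g \o phi).
Proof.
move=> g_borel g_push phi_param B hB.
by rewrite -g_push //; exact: phi_param (g_borel _ hB).
Qed.

Lemma lip_prec_refl (X : mmData R) : lip_prec X X.
Proof. by exists id; split. Qed.

Lemma measure_nondecreasing_gt {d} {T : measurableType d}
    {mu : {measure set T -> \bar R}} {F : nat -> set T} {l e : R} :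
  (forall n, measurable (F n)) -> nondecreasing_seq F ->
  mu (\bigcup_n F n) = l%:E -> 0 < e -> exists N, ((l - e)%:E < mu (F N))%E.
Proof.
move=> F_meas F_nd mu_F e0.
have cvg_muF : mu \o F @ \oo --> l%:E.
  by rewrite -mu_F; apply: nondecreasing_cvg_mu => //; exact: bigcup_measurable.
have [|N _ hN] := cvg_muF _ (@nbhs_open_ereal_gt _ l (fun r => r - e) _).
  by rewrite gtrBl.
by exists N; exact: hN N (leqnn N).
Qed.

Lemma parameter_bounded {X : mmData R} {phi : R -> X} {e : R} :
  is_metric (@mdist R X) -> parameter phi -> 0 < e ->
  exists (r : R) (I : set R), 0 <= r /\ I `<=` `[0, 1[%classic /\ measurable I /\
    ((1 - e)%:E <= lebesgue_measure I)%E /\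
    forall a b, I a -> I b -> mdist (phi a) (phi b) <= r.
Proof.
move=> X_metric phi_param e0; have [_ [dC dtri]] := X_metric.
pose I (n : nat) := [set a : R | `[0, 1[%classic a /\ mdist (phi 0) (phi a) < n%:R].
have I_meas n : measurable (I n).
  have ball_borel : @mm_borel R X [set y | mdist (phi 0) y < n%:R].
    by apply: sub_gen_smallest; exact: d_open_ball.
  exact: (phi_param _ ball_borel).1.
have I_nd : nondecreasing_seq I.
  move=> n m nm; apply/subsetPset => a [ha hb]; split => //.
  by apply: lt_le_trans hb _; rewrite ler_nat.
have I_cover : \bigcup_n I n = `[0, 1[%classic.
  apply/seteqP; split => [a [n _ []]//|a ha].
  exists (Num.bound (mdist (phi 0) (phi a))) => //; split => //.
  by apply: archi_boundP; exact: is_metric_ge0.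
have lebesgue_I : lebesgue_measure (\bigcup_n I n) = 1%:E.
  by rewrite I_cover lebesgue_measure_itv /= lte_fin ltr01 oppr0 adde0.
have [N hN] :=
  measure_nondecreasing_gt (mu := lebesgue_measure) (l := 1) I_meas I_nd lebesgue_I e0.
exists (2 * N%:R), (I N); split; first by rewrite mulr_ge0.
split; first by move=> a [].
do 2 split => //; first exact: ltW.
move=> a b [_ ha] [_ hb]; have := dtri (phi a) (phi 0) (phi b).
by rewrite (dC (phi a) (phi 0)); lra.
Qed.

Section BoxDistance.
Variables (X Y : mmData R).

Lemma box_dist_eq0 : ~ (exists e, box_admissible X Y e) -> box_dist X Y = 0.
Proof.
move=> no_adm; rewrite /box_dist (_ : [set e | _] = set0) ?inf0 //.
by apply/seteqP; split => // e he; apply: no_adm; exists e.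
Qed.

Lemma box_dist_ge0 : 0 <= box_dist X Y.
Proof.
have [[e he]|no_adm] := pselect (exists e, box_admissible X Y e).
  by apply: lb_le_inf; [exists e | move=> e' []].
by rewrite box_dist_eq0.
Qed.

Lemma box_dist_le e : box_admissible X Y e -> box_dist X Y <= e.
Proof. by move=> he; apply: ge_inf he; exists 0 => e' []. Qed.

End BoxDistance.

Lemma box_dist_refl (X : mmData R) : box_dist X X = 0.
Proof.
have [[e [_ [phi [_ [_ [phi_param _]]]]]]|no_adm] :=
  pselect (exists e, box_admissible X X e).
  apply/le_anti; rewrite box_dist_ge0 andbT; apply: box_dist_le.
  split => //; exists phi, phi, `[0, 1[%classic; do 3 split => //.
  split; first exact: measurable_itv.
  split; first by rewrite lebesgue_measure_itv /= lte_fin ltr01 oppr0 adde0 addr0.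
  by move=> s t _ _; rewrite subrr normr0.
exact: box_dist_eq0.
Qed.

End MMSpaces.

Section Interpolation.
Context {R : realType} {X0 X1 : mmData R} {f : X1 -> X0}.
Hypotheses (X0_mm : mm_space X0) (X1_mm : mm_space X1).
Hypotheses (f_lip : one_lipschitz f) (f_push : push_eq f).

Let d0_ge0 (x y : X0) : 0 <= mdist x y := is_metric_ge0 X0_mm.1 x y.
Let d1_ge0 (x y : X1) : 0 <= mdist x y := is_metric_ge0 X1_mm.1 x y.

Lemma interpE0 {t : R} : t <= 0 -> interp f t = X0.
Proof. by rewrite /interp => ->. Qed.

Lemma interpE1 {t : R} : 1 <= t -> interp f t = X1.
Proof. by move=> t_ge1; rewrite /interp leNgt (lt_le_trans ltr01 t_ge1) t_ge1. Qed.

Lemma interpE {t : R} : 0 < t < 1 -> interp f t = @MMData R X1 (interp_dist f t) (mmeas X1).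
Proof. by case/andP=> t_gt0 t_lt1; rewrite /interp leNgt t_gt0 leNgt t_lt1. Qed.

Lemma interp_dist0 x y : interp_dist f 0 x y = mdist (f x) (f y).
Proof. by rewrite /interp_dist subr0 mul1r mul0r addr0. Qed.

Lemma interp_dist1 x y : interp_dist f 1 x y = mdist x y.
Proof. by rewrite /interp_dist subrr mul0r add0r mul1r. Qed.

Lemma interp_dist_le s t x y : s <= t -> interp_dist f s x y <= interp_dist f t x y.
Proof. by move=> st; rewrite /interp_dist; have := f_lip x y; nra. Qed.

Lemma interp_dist_le1 t x y : t <= 1 -> interp_dist f t x y <= mdist x y.
Proof. by move=> t_le1; rewrite -interp_dist1 interp_dist_le. Qed.

Lemma interp_dist_ge t x y : t <= 1 -> t * mdist x y <= interp_dist f t x y.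
Proof. by move=> t_le1; rewrite /interp_dist lerDr mulr_ge0 ?subr_ge0. Qed.

Lemma interp_dist_lipschitz s t x y :
  `|interp_dist f s x y - interp_dist f t x y| <= `|s - t| * mdist x y.
Proof.
rewrite /interp_dist (_ : _ - _ = (s - t) * (mdist x y - mdist (f x) (f y))); last by ring.
by rewrite normrM ler_wpM2l // ger0_norm ?subr_ge0 ?f_lip // gerBl.
Qed.

Lemma interp_dist_metric t : 0 < t <= 1 -> is_metric (interp_dist f t).
Proof.
case/andP=> t_gt0 t_le1.
have [[d0_eq0 [d0C d0tri]] [[d1_eq0 [d1C d1tri]] _]] := (X0_mm.1, X1_mm).
split; [|split].
- move=> x y; split => [dxy|<-].
    apply/d1_eq0/le_anti; rewrite d1_ge0 andbT.
    by rewrite -(pmulr_rle0 _ t_gt0) -dxy interp_dist_ge.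
  by rewrite /interp_dist (proj2 (d0_eq0 _ _)) // (proj2 (d1_eq0 _ _)) // !mulr0 addr0.
- by move=> x y; rewrite /interp_dist d0C d1C.
- move=> x y z; rewrite /interp_dist.
  have := ler_wpM2l (ltW t_gt0) (d1tri x y z).
  have := ler_wpM2l (_ : 0 <= 1 - t) (d0tri (f x) (f y) (f z)).
  by rewrite subr_ge0 t_le1 !mulrDr; lra.
Qed.

Lemma interp_mm_space t : 0 < t < 1 -> mm_space (interp f t).
Proof.
case/andP=> t_gt0 t_lt1; rewrite interpE ?t_gt0 //.
have t_le1 := ltW t_lt1.
apply: (mm_space_comparable t_gt0) => // [x y|x y|]; first exact: interp_dist_le1.
  exact: interp_dist_ge.
by apply: interp_dist_metric; rewrite t_gt0.
Qed.

Lemma d_borel_interp t : 0 < t <= 1 -> d_borel (interp_dist f t) = d_borel (@mdist R X1).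
Proof.
case/andP=> t_gt0 t_le1.
by apply: (d_borel_comparable t_gt0) => x y; [exact: interp_dist_le1|exact: interp_dist_ge].
Qed.

Lemma interp_parameter {phi : R -> X1} {u : R} : 0 <= u <= 1 -> parameter phi ->
  exists p : R -> interp f u, parameter p /\
    forall a b, mdist (p a) (p b) = interp_dist f u (phi a) (phi b).
Proof.
case/andP=> u_ge0 u_le1 phi_param.
have [u_le0|u_gt0] := leP u 0.
  have -> : u = 0 by apply/le_anti; rewrite u_le0.
  rewrite interpE0 //; exists (f \o phi); split => [|a b]; last by rewrite interp_dist0.
  exact: parameter_comp (one_lipschitz_borel f_lip) f_push phi_param.
have [u_ge1|u_lt1] := leP 1 u.
  have -> : u = 1 by apply/le_anti; rewrite u_le1.
  by rewrite interpE1 //; exists phi; split => // a b; rewrite interp_dist1.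
rewrite interpE ?u_gt0 //; exists phi; split => // B.
by rewrite /mm_borel /= d_borel_interp ?u_gt0 //; exact: phi_param.
Qed.

Lemma interp_parameter_inv u : 0 < u ->
  forall p : R -> interp f u, parameter p -> exists phi : R -> X1, parameter phi.
Proof.
move=> u_gt0; have [u_ge1|u_lt1] := leP 1 u.
  by rewrite interpE1 // => p p_param; exists p.
rewrite interpE ?u_gt0 // => p p_param; exists p => B hB; apply: p_param.
by rewrite /mm_borel /= d_borel_interp // u_gt0 ltW.
Qed.

Lemma interp_box_continuous_parameter {phi : R -> X1} {e : R} : parameter phi -> 0 < e ->
  exists d, 0 < d /\ forall s t, 0 <= s <= 1 -> 0 <= t <= 1 -> `|s - t| < d ->
    box_dist (interp f s) (interp f t) < e.
Proof.
move=> phi_param e_gt0; have e2_gt0 : 0 < e / 2 by rewrite divr_gt0.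
have [r [I [r_ge0 [I01 [I_meas [I_large I_bounded]]]]]] :=
  parameter_bounded X1_mm.1 phi_param e2_gt0.
pose d := e / 2 / (r + 1).
have d_gt0 : 0 < d by rewrite divr_gt0 // ltr_pwDr.
have d_r : d * (r + 1) = e / 2 by rewrite /d divfK // gt_eqF // ltr_pwDr.
exists d; split => // s t hs ht st_lt_d.
have [ps [ps_param ps_dist]] := interp_parameter hs phi_param.
have [pt [pt_param pt_dist]] := interp_parameter ht phi_param.
apply: (@le_lt_trans _ _ (e / 2)); last by lra.
apply: box_dist_le; split; first exact: ltW.
exists ps, pt, I; do 5 split => //.
move=> a b Ia Ib; rewrite ps_dist pt_dist.
apply: le_trans (interp_dist_lipschitz _ _ _ _) _.
have := I_bounded a b Ia Ib; have := d1_ge0 (phi a) (phi b); have := normr_ge0 (s - t).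
by nra.
Qed.

(* box_dist is an infimum and inf set0 = 0: without a parameter of X_1, no X_u
   with u > 0 has one, so for s <> t no e is admissible. *)
Lemma interp_box_dist_no_parameter s t :
  ~ (exists phi : R -> X1, parameter phi) -> 0 <= s -> 0 <= t ->
  box_dist (interp f s) (interp f t) = 0.
Proof.
move=> no_param s_ge0 t_ge0.
have [<-|s_neq_t] := eqVneq s t; first exact: box_dist_refl.
apply: box_dist_eq0 => -[e [_ [p [q [_ [p_param [q_param _]]]]]]].
apply: no_param; have [s_gt0|s_le0] := ltP 0 s; first exact: interp_parameter_inv p_param.
have t_gt0 : 0 < t.
  by rewrite lt_neqAle t_ge0 andbT; apply: contra s_neq_t => /eqP <-; rewrite eq_le s_le0.
exact: interp_parameter_inv q_param.
Qed.

Lemma interp_box_uniform_continuous {e : R} : 0 < e ->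
  exists d, 0 < d /\ forall s t, 0 <= s <= 1 -> 0 <= t <= 1 -> `|s - t| < d ->
    box_dist (interp f s) (interp f t) < e.
Proof.
move=> e_gt0.
have [[phi phi_param]|no_param] := pselect (exists phi : R -> X1, parameter phi).
  exact: interp_box_continuous_parameter phi_param e_gt0.
exists 1; split => // s t /andP[s_ge0 _] /andP[t_ge0 _] _.
by rewrite interp_box_dist_no_parameter.
Qed.

Lemma lip_prec_X0_interp t : 0 <= t <= 1 -> lip_prec X0 (interp f t).
Proof.
case/andP=> t_ge0 t_le1.
have [t_le0|t_gt0] := leP t 0; first by rewrite interpE0 //; exact: lip_prec_refl.
have [t_ge1|t_lt1] := leP 1 t; first by rewrite interpE1 //; exists f.
rewrite interpE ?t_gt0 //; exists f; split => // x y /=.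
by rewrite -interp_dist0 interp_dist_le.
Qed.

Lemma lip_prec_interp_X1 t : 0 <= t <= 1 -> lip_prec (interp f t) X1.
Proof.
case/andP=> t_ge0 t_le1.
have [t_le0|t_gt0] := leP t 0; first by rewrite interpE0 //; exists f.
have [t_ge1|t_lt1] := leP 1 t; first by rewrite interpE1 //; exact: lip_prec_refl.
by rewrite interpE ?t_gt0 //; exists id; split => // x y /=; exact: interp_dist_le1.
Qed.

Lemma interp_lip_monotone s t : 0 <= s -> s <= t -> t <= 1 ->
  lip_prec (interp f s) (interp f t).
Proof.
move=> s_ge0 st t_le1.
have [s_le0|s_gt0] := leP s 0.
  by rewrite (interpE0 s_le0); apply: lip_prec_X0_interp; rewrite (le_trans s_ge0 st).
have [t_ge1|t_lt1] := leP 1 t.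
  by rewrite (interpE1 t_ge1); apply: lip_prec_interp_X1; rewrite s_ge0 (le_trans st t_le1).
rewrite !interpE ?s_gt0 ?t_lt1 ?(lt_le_trans s_gt0 st) ?(le_lt_trans st t_lt1) //.
by exists id; split => // x y /=; exact: interp_dist_le.
Qed.

End Interpolation.

Theorem proposition7p1 (R : realType) (X0 X1 : mmData R) (f : X1 -> X0) :
  mm_space X0 -> mm_space X1 -> lip_prec X0 X1 ->
  one_lipschitz f -> push_eq f ->
  (forall t : R, 0 < t < 1 -> mm_space (interp f t)) /\
  (forall t : R, 0 <= t <= 1 -> forall e : R, 0 < e ->
     exists d : R, 0 < d /\ forall s : R, 0 <= s <= 1 -> `|s - t| < d ->
       box_dist (interp f s) (interp f t) < e) /\
  (forall s t : R, 0 <= s -> s <= t -> t <= 1 -> lip_prec (interp f s) (interp f t)).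
Proof.
move=> X0_mm X1_mm _ f_lip f_push; split; [|split].
- by move=> t; exact: interp_mm_space.
- move=> t t01 e e_gt0.
  have [d [d_gt0 close]] := interp_box_uniform_continuous X0_mm X1_mm f_lip f_push e_gt0.
  by exists d; split => // s s01; exact: close.
- by move=> s t; exact: interp_lip_monotone.
Qed.
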